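(* Let $h:\mathbb{R}\to\mathbb{R}$ be a smooth function with $h(T)=\pi/2$ for $T\le 0$, $0<h(T)<\pi/2$ for $0<T<1$, and $h(T)=0$ for $T\ge 1$, and let $g(x)=\tan\bigl(h(x)\bigr)$ for $0<x<1$. Assume $g'''(x)<0$ for all $0<x<1$. Then $g''(x)>0$ and $g'(x)<0$ for $0<x<1$, and $$\lim_{x\to 1_-}\frac{g'(x)}{g(x)}=-\infty.$$ *)

From Stdlib Require Import Reals.
From Coquelicot Require Import Coquelicot.
Open Scope R_scope.

Definition smooth (f : R -> R) : Prop := forall (n : nat) (x : R), ex_derive_n f n x.

(* g = tan o h; only its values on (0,1) matter (derivatives there are local). *)
Definition gfun (h : R -> R) : R -> R := fun x => tan (h x).

(** Since cos (h x) > 0 for x > 0, g = tan o h is C^3 on (0, +oo), and it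
    vanishes identically on [1, +oo), so g'(1) = g''(1) = 0.  As g''' < 0 on
    (0, 1), g'' decreases to g''(1) = 0, hence g'' > 0; then g' increases to
    g'(1) = 0, hence g' < 0.  Because g' is increasing, t |-> g t - g'(x) t
    increases on [x, 1], which gives g(x) < g'(x) (x - 1), i.e.
    g'(x) / g(x) <= 1 / (x - 1) -> -oo as x -> 1-. *)

From Stdlib Require Import Reals Lra.
From Coquelicot Require Import Coquelicot.
Open Scope R_scope.

Lemma incr_function_interior (f df : R -> R) (a b : R) : a < b ->
  (forall t, a <= t <= b -> is_derive f t (df t)) ->
  (forall t, a < t < b -> 0 < df t) -> f a < f b.
Proof.
  intros Hab Hd Hpos.
  destruct (MVT_cor2 f df a b Hab) as [c [Hfc Hc]].
  - intros t Ht. apply is_derive_Reals, Hd, Ht.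
  - specialize (Hpos c Hc). nra.
Qed.

Lemma decr_function_interior (f df : R -> R) (a b : R) : a < b ->
  (forall t, a <= t <= b -> is_derive f t (df t)) ->
  (forall t, a < t < b -> df t < 0) -> f b < f a.
Proof.
  intros Hab Hd Hneg.
  enough (- f a < - f b) by lra.
  apply (incr_function_interior (fun t => - f t) (fun t => - df t)); [exact Hab | |].
  - intros t Ht. exact (is_derive_opp f t (df t) (Hd t Ht)).
  - intros t Ht. specialize (Hneg t Ht). lra.
Qed.

Lemma Derive_eq_0_of_vanishing (f : R -> R) (b : R) :
  (forall y, b <= y -> f y = 0) -> ex_derive f b ->
  forall y, b <= y -> Derive f y = 0.
Proof.
  intros Hf Hdb y Hy.
  destruct (Rle_lt_or_eq_dec _ _ Hy) as [Hby | <-].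
  - rewrite (Derive_ext_loc f (fun _ => 0)); [apply Derive_const |].
    apply (filter_imp (fun t => b < t)); [intros t Ht; apply Hf; lra |].
    exact (open_gt b y Hby).
  - (* every right difference quotient of f at b is 0 *)
    pose proof (proj1 (is_derive_Reals _ _ _) (Derive_correct f b Hdb)) as Hlim.
    destruct (Req_dec (Derive f b) 0) as [E | E]; [exact E | exfalso].
    destruct (Hlim _ (Rabs_pos_lt _ E)) as [[d Hd] Hquot]; simpl in Hquot.
    specialize (Hquot (d / 2) ltac:(lra) ltac:(rewrite Rabs_pos_eq; lra)).
    rewrite !Hf, Rminus_0_r, Rdiv_0_l, Rminus_0_l, Rabs_Ropp in Hquot by lra.
    lra.
Qed.

Lemma filterlim_Rinv_sub_left (b : R) :
  filterlim (fun x => / (x - b)) (at_left b) (Rbar_locally m_infty).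
Proof.
  apply (filterlim_comp _ _ _ (fun x => x - b) Rinv _ (at_left 0));
    [| exact filterlim_Rinv_0_left].
  intros P [eps HP]. exists eps. intros x Hx Hxb.
  apply HP; [| lra].
  revert Hx. unfold ball; simpl. unfold AbsRing_ball, abs, minus, plus, opp; simpl.
  now replace (x - b + - 0) with (x + - b) by ring.
Qed.

Section VanishingTail.

Variables (f : R -> R) (a b : R).
Hypothesis a_lt_b : a < b.
Hypothesis f_tail : forall y, b <= y -> f y = 0.
Hypothesis ex_derive_f : forall x, a < x <= b -> ex_derive f x.
Hypothesis ex_derive_Derive_f : forall x, a < x <= b -> ex_derive (Derive f) x.
Hypothesis ex_derive_Derive2_f :
  forall x, a < x <= b -> ex_derive (Derive (Derive f)) x.
Hypothesis Derive3_neg : forall x, a < x < b -> Derive_n f 3 x < 0.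

Lemma Derive_tail y : b <= y -> Derive f y = 0.
Proof. apply Derive_eq_0_of_vanishing; [exact f_tail | apply ex_derive_f; lra]. Qed.

Lemma Derive2_tail : Derive (Derive f) b = 0.
Proof.
  apply (Derive_eq_0_of_vanishing (Derive f) b); [exact Derive_tail | | lra].
  apply ex_derive_Derive_f; lra.
Qed.

Lemma Derive2_pos x : a < x < b -> 0 < Derive_n f 2 x.
Proof.
  intros Hx. simpl. rewrite <- Derive2_tail.
  apply (decr_function_interior _ (Derive (Derive (Derive f)))); [lra | |].
  - intros t Ht. apply Derive_correct, ex_derive_Derive2_f; lra.
  - intros t Ht. apply Derive3_neg; lra.
Qed.

Lemma Derive_incr s t : a < s -> s < t <= b -> Derive f s < Derive f t.
Proof.
  intros Hs Hst.
  apply (incr_function_interior _ (Derive (Derive f))); [lra | |].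
  - intros u Hu. apply Derive_correct, ex_derive_Derive_f; lra.
  - intros u Hu. apply (Derive2_pos u); lra.
Qed.

Lemma Derive_neg x : a < x < b -> Derive f x < 0.
Proof.
  intros Hx. rewrite <- (Derive_tail b) by lra.
  apply Derive_incr; lra.
Qed.

Lemma lt_Derive_mul_sub x : a < x < b -> f x < Derive f x * (x - b).
Proof.
  intros Hx.
  enough (f x - Derive f x * x < f b - Derive f x * b)
    by (rewrite (f_tail b) in * by lra; lra).
  apply (incr_function_interior (fun t => f t - Derive f x * t)
           (fun t => Derive f t - Derive f x)); [lra | |].
  - intros t Ht. apply (is_derive_minus f (fun t => Derive f x * t)).
    + apply Derive_correct, ex_derive_f; lra.
    + auto_derive; [exact I | ring].
  - intros t Ht. pose proof (Derive_incr x t). lra.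
Qed.

Hypothesis f_pos : forall x, a < x < b -> 0 < f x.

Lemma filterlim_Derive_div_at_left :
  filterlim (fun x => Derive f x / f x) (at_left b) (Rbar_locally m_infty).
Proof.
  apply (filterlim_le_m_infty (fun x => / (x - b)));
    [| exact (filterlim_Rinv_sub_left b)].
  exists (mkposreal (b - a) ltac:(lra)).
  intros x Hx Hxb. revert Hx. unfold ball; simpl.
  unfold AbsRing_ball, abs, minus, plus, opp; simpl.
  rewrite Rabs_left by lra. intros Hx.
  pose proof (f_pos x ltac:(lra)) as Hfx.
  pose proof (lt_Derive_mul_sub x ltac:(lra)) as Hlt.
  apply Rlt_le, Rminus_lt.
  replace (Derive f x / f x - / (x - b))
    with ((Derive f x * (x - b) - f x) / (f x * (x - b))) by (field; lra).
  apply Rdiv_pos_neg; nra.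
Qed.

End VanishingTail.

Section TanComposition.

Variable h : R -> R.
Hypothesis h_smooth : smooth h.
Hypothesis h_mid : forall T, 0 < T < 1 -> 0 < h T < PI / 2.
Hypothesis h_tail : forall T, 1 <= T -> h T = 0.

Lemma cos_h_pos x : 0 < x -> 0 < cos (h x).
Proof.
  intros Hx. pose proof PI_RGT_0.
  destruct (Rlt_le_dec x 1) as [Hx1 | Hx1].
  - specialize (h_mid x (conj Hx Hx1)). apply cos_gt_0; lra.
  - rewrite h_tail by exact Hx1. rewrite cos_0. lra.
Qed.

Lemma gfun_tail y : 1 <= y -> gfun h y = 0.
Proof. intros Hy. unfold gfun. rewrite h_tail by exact Hy. apply tan_0. Qed.

Lemma gfun_pos x : 0 < x < 1 -> 0 < gfun h x.
Proof. intros Hx. specialize (h_mid x Hx). apply tan_gt_0; lra. Qed.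

Lemma is_derive_gfun x : 0 < x ->
  is_derive (gfun h) x (Derive h x * (gfun h x ^ 2 + 1)).
Proof.
  intros Hx. pose proof (cos_h_pos x Hx).
  apply (is_derive_comp tan h x); [apply is_derive_tan; lra |].
  exact (Derive_correct h x (h_smooth 1%nat x)).
Qed.

Lemma ex_derive_gfun x : 0 < x -> ex_derive (gfun h) x.
Proof. intros Hx. eexists. exact (is_derive_gfun x Hx). Qed.

Lemma Derive_gfun_loc x : 0 < x ->
  locally x (fun t => Derive h t * (gfun h t ^ 2 + 1) = Derive (gfun h) t).
Proof.
  intros Hx. apply (filter_imp (fun t => 0 < t)); [| exact (open_gt 0 x Hx)].
  intros t Ht. symmetry. apply is_derive_unique, is_derive_gfun, Ht.
Qed.

Lemma ex_derive_Derive_gfun x : 0 < x -> ex_derive (Derive (gfun h)) x.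
Proof.
  intros Hx. apply (ex_derive_ext_loc _ _ x (Derive_gfun_loc x Hx)).
  auto_derive. split; [exact (h_smooth 2%nat x) | split; [| exact I]].
  apply ex_derive_gfun, Hx.
Qed.

Lemma Derive2_gfun_loc x : 0 < x ->
  locally x (fun t => Derive (Derive h) t * (gfun h t ^ 2 + 1)
                      + Derive h t * (2 * gfun h t * Derive (gfun h) t)
                      = Derive (Derive (gfun h)) t).
Proof.
  intros Hx. apply (filter_imp (fun t => 0 < t)); [| exact (open_gt 0 x Hx)].
  intros t Ht. rewrite <- (Derive_ext_loc _ _ t (Derive_gfun_loc t Ht)).
  symmetry. apply is_derive_unique. auto_derive.
  - split; [exact (h_smooth 2%nat t) | split; [apply ex_derive_gfun, Ht | exact I]].
  - (* auto_derive eta-expands the unknown functions it differentiates *)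
    change (fun s => Derive h s) with (Derive h).
    change (fun s => gfun h s) with (gfun h).
    ring.
Qed.

Lemma ex_derive_Derive2_gfun x : 0 < x -> ex_derive (Derive (Derive (gfun h))) x.
Proof.
  intros Hx. apply (ex_derive_ext_loc _ _ x (Derive2_gfun_loc x Hx)).
  pose proof (ex_derive_gfun x Hx). pose proof (ex_derive_Derive_gfun x Hx).
  pose proof (h_smooth 2%nat x). pose proof (h_smooth 3%nat x).
  auto_derive. tauto.
Qed.

End TanComposition.

Theorem mainTheorem3 (h : R -> R)
  (hsmooth : smooth h)
  (hneg : forall T, T <= 0 -> h T = PI / 2)
  (hmid : forall T, 0 < T < 1 -> 0 < h T < PI / 2)
  (hpos : forall T, 1 <= T -> h T = 0)
  (g3 : forall x, 0 < x < 1 -> Derive_n (gfun h) 3 x < 0) :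
  (forall x, 0 < x < 1 -> Derive_n (gfun h) 2 x > 0 /\ Derive (gfun h) x < 0) /\
  filterlim (fun x => Derive (gfun h) x / gfun h x) (at_left 1) (Rbar_locally m_infty).
Proof.
  pose proof (gfun_tail h hpos) as tail.
  assert (d1 : forall x, 0 < x <= 1 -> ex_derive (gfun h) x).
  { intros x Hx. apply (ex_derive_gfun h hsmooth hmid hpos); lra. }
  assert (d2 : forall x, 0 < x <= 1 -> ex_derive (Derive (gfun h)) x).
  { intros x Hx. apply (ex_derive_Derive_gfun h hsmooth hmid hpos); lra. }
  assert (d3 : forall x, 0 < x <= 1 -> ex_derive (Derive (Derive (gfun h))) x).
  { intros x Hx. apply (ex_derive_Derive2_gfun h hsmooth hmid hpos); lra. }
  split.
  - intros x Hx. split.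
    + exact (Derive2_pos _ _ _ Rlt_0_1 tail d1 d2 d3 g3 x Hx).
    + exact (Derive_neg _ _ _ Rlt_0_1 tail d1 d2 d3 g3 x Hx).
  - exact (filterlim_Derive_div_at_left _ _ _ Rlt_0_1 tail d1 d2 d3 g3
             (gfun_pos h hmid)).
Qed.
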